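(* For every tree $T$ on $n$ vertices, $\operatorname{diam}(\mathcal{C}_3(T))\ge\lfloor 3n/2\rfloor$.
   Context: A proper 3-coloring of a tree $T=(V,E)$ is a map $f\colon V\to\mathbb{Z}/3\mathbb{Z}$ with $f(u)\neq f(v)$ for every edge $uv\in E$. The 3-coloring graph $\mathcal{C}_3(T)$ has the proper 3-colorings as vertices, two colorings adjacent iff they differ at exactly one vertex; $\operatorname{diam}$ denotes graph diameter. *)

From mathcomp Require Import all_boot all_algebra.
Set Implicit Arguments. Unset Strict Implicit. Unset Printing Implicit Defensive.

Section Coloring.
Variables (V : finType) (e : rel V).

Definition simple_graph : Prop := symmetric e /\ irreflexive e.

Definition has_cycle : Prop :=
  exists s : seq V, [/\ 2 < size s, uniq s & cycle e s].

Definition connected_graph : Prop := forall x y : V, connect e x y.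

Definition is_tree : Prop := [/\ simple_graph, connected_graph & ~ has_cycle].

Definition coloring := {ffun V -> 'Z_3}.

Definition proper (f : coloring) : bool :=
  [forall u, forall v, e u v ==> (f u != f v)].

Definition recol_adj : rel coloring := fun f g =>
  [&& proper f, proper g & #|[set v | f v != g v]| == 1].

Definition walk_of_len (k : nat) (f g : coloring) : bool :=
  [exists p : k.-tuple coloring, path recol_adj f p && (last f p == g)].

(* A shortest walk
   visits distinct vertices, so it has length < #|coloring|; if g is not
   reachable the value #|coloring| is returned (never happens for trees). *)
Definition recol_dist (f g : coloring) : nat :=
  find (fun k => walk_of_len k f g) (iota 0 #|{: coloring}|).

Definition recol_diam : nat :=
  \max_(f : coloring | proper f) \max_(g : coloring | proper g) recol_dist f g.

End Coloring.

From Pilot Require Import Defs.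
From mathcomp Require Import all_boot all_algebra zify.
Set Implicit Arguments. Unset Strict Implicit. Unset Printing Implicit Defensive.
Import GRing.Theory.

(* Trees are bipartite: let Q be a side with at least n/2 vertices and S a subset of Q
   of size n/2.  Compare the colouring that is 0 on Q and 1 elsewhere with the one that
   is 1 on S, 2 on Q \ S and 0 elsewhere.  Along a recolouring walk let D v be the
   number of +1 recolourings of v minus the number of -1 recolourings.  Every edge uw
   has a winding in {1, -1} telling whether the colour of w is that of u plus or minus
   one; recolouring u by +-1 changes the winding of each edge at u by +-2, so
   2 (D u - D w) is the change of winding of uw.  For our two colourings this forces
   D v + [v in S] to be a constant m, while the colours force m = 2 (mod 3), so m is
   neither 0 nor 1.  Hence every vertex is recoloured at least once, and all of S or all
   of its complement at least twice: the walk has length at least n + n/2. *)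

Lemma not_uniq_split (T : eqType) (s : seq T) : ~~ uniq s ->
  exists s1 x s2 s3, s = s1 ++ x :: s2 ++ x :: s3.
Proof.
elim: s => [|y s IHs] //=; rewrite negb_and negbK => /orP[/splitPr[s2 s3] | ].
  by exists [::], y, s2, s3.
by case/IHs=> s1 [x [s2 [s3 ->]]]; exists (y :: s1), x, s2, s3.
Qed.

Section Bipartite.
Variables (V : finType) (e : rel V).
Hypotheses (e_sym : symmetric e) (e_irr : irreflexive e).

Lemma odd_cycle_has_cycle (s : seq V) : odd (size s) -> cycle e s -> has_cycle e.
Proof.
have [m] := ubnP (size s); elim: m s => // m IHm s le_sm odd_s cyc_s.
have [uniq_s | /not_uniq_split[s1 [x [s2 [s3 def_s]]]]] := boolP (uniq s).
  exists s; split=> //.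
  by case: s odd_s cyc_s {le_sm uniq_s} => [|x [|y [|z t]]] //= _; rewrite e_irr.
(* a repeated vertex x splits the closed walk into two shorter ones, one of odd length *)
move: cyc_s; rewrite def_s -(rot_cycle (size s1)) rot_size_cat -cat_cons -catA.
rewrite cat_cons /cycle rcons_cat rcons_cons cat_path /= => /and3P[p1 e_x p2].
have cyc1 : cycle e (x :: s2) by rewrite /cycle rcons_path p1 e_x.
have cyc2 : cycle e (x :: s3 ++ s1) by [].
have size_s : size s = size (x :: s2) + size (x :: s3 ++ s1).
  by rewrite def_s /= !size_cat /= !size_cat /=; lia.
move: odd_s; rewrite size_s oddD; case: (boolP (odd _)) => /= [odd1 _ | _ odd2].
  by apply: (IHm (x :: s2)) => //; move: le_sm; rewrite size_s /=; lia.
by apply: (IHm (x :: s3 ++ s1)) => //; move: le_sm; rewrite size_s /=; lia.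
Qed.

Definition double_cover : rel (V * bool) := fun a b => e a.1 b.1 && (b.2 == ~~ a.2).

Lemma double_cover_sym : symmetric double_cover.
Proof. by move=> [x b] [y c]; rewrite /double_cover /= e_sym; case: b; case: c. Qed.

Lemma double_cover_path x b (p : seq (V * bool)) : path double_cover (x, b) p ->
  [/\ path e x (map fst p), last x (map fst p) = (last (x, b) p).1
    & (last (x, b) p).2 = b (+) odd (size p)].
Proof.
elim: p x b => [|[y c] p IHp] x b /=; first by rewrite addbF.
case/andP=> /andP[/= e_xy /eqP ->] /IHp[path_p last_p parity_p].
by rewrite e_xy path_p last_p parity_p addbN addNb.
Qed.

Lemma double_cover_sheets_disconnected v :
  ~ has_cycle e -> ~~ connect double_cover (v, false) (v, true).
Proof.
move=> acyclic; apply/negP.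
case/connectP=> p /double_cover_path[path_p last_p parity_p] end_p.
apply: acyclic; rewrite -end_p /= in last_p parity_p.
move: path_p last_p parity_p; rewrite -(size_map fst).
case/lastP: (map fst p) => [|q y] //; rewrite last_rcons size_rcons.
move=> path_q y_v odd_q; subst y.
exact: (@odd_cycle_has_cycle (v :: q) (esym odd_q)).
Qed.

Lemma connect_double_cover x y b :
  connect e x y -> exists c, connect double_cover (x, b) (y, c).
Proof.
case/connectP=> p + ->; elim: p x b => [|z p IHp] x b /=; first by exists b.
case/andP=> e_xz /(IHp z (~~ b))[c conn_c]; exists c.
by apply: connect_trans conn_c; apply: connect1; rewrite /double_cover /= e_xz eqxx.
Qed.

Definition bipartition (Q : {set V}) := forall u w, e u w -> (u \in Q) != (w \in Q).

Lemma tree_bipartition : connected_graph e -> ~ has_cycle e -> exists Q, bipartition Q.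
Proof.
move=> conn acyclic; have [r _ | V0] := pickP (fun _ : V => true); last first.
  by exists set0 => u; have := V0 u.
exists [set v | connect double_cover (r, false) (v, false)] => u w e_uw; rewrite !inE.
have crossing b : connect double_cover (u, b) (w, ~~ b).
  by apply: connect1; rewrite /double_cover /= e_uw eqxx.
have sym_dc := sym_connect_sym double_cover_sym.
case ru: (connect _ _ (u, false)); case rw: (connect _ _ (w, false)) => //.
  case/negP: (double_cover_sheets_disconnected w acyclic).
  by apply: connect_trans (connect_trans ru (crossing false)); rewrite sym_dc.
have [[] ru'] := connect_double_cover false (conn r u); last by rewrite ru' in ru.
by move: (connect_trans ru' (crossing true)); rewrite rw.
Qed.

Lemma bipartition_half Q : bipartition Q ->
  exists2 Q', bipartition Q' & #|V|./2 <= #|Q'|.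
Proof.
move=> bipQ; case: (leqP #|V|./2 #|Q|) => halfQ; first by exists Q.
exists (~: Q); last by have := cardsC Q; lia.
by move=> u w /bipQ; rewrite !in_setC; case: (u \in Q); case: (w \in Q).
Qed.

End Bipartite.

Section Step.
Local Open Scope ring_scope.

Definition step (a b : 'Z_3) : int := if b == a + 1 then 1 else -1.

Lemma step_congr (a b : 'Z_3) : a != b -> (step a b = b%:Z - a%:Z %[mod 3])%Z.
Proof. by case: a => [[|[|[|?]]] ?] //; case: b => [[|[|[|?]]] ?]. Qed.

Lemma stepN (a b : 'Z_3) : a != b -> step a b = - step b a.
Proof. by case: a => [[|[|[|?]]] ?] //; case: b => [[|[|[|?]]] ?]. Qed.

Lemma step_recolor (a b c : 'Z_3) : a != b -> c != a -> c != b ->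
  2 * step a b = step b c - step a c.
Proof.
by case: a => [[|[|[|?]]] ?] //; case: b => [[|[|[|?]]] ?] //; case: c => [[|[|[|?]]] ?].
Qed.
End Step.

Lemma proper_edge (V : finType) (e : rel V) (f : coloring V) :
  Defs.proper e f -> forall u w, e u w -> f u != f w.
Proof. by move=> /forallP pf u w; move: (pf u) => /forallP /(_ w) /implyP. Qed.

Section Displacement.
Variables (V : finType) (e : rel V).
Hypothesis e_irr : irreflexive e.
Local Open Scope ring_scope.

Definition displacement (f g : coloring V) (D : V -> int) : Prop :=
  (forall v, (D v = (g v)%:Z - (f v)%:Z %[mod 3])%Z) /\
  (forall u w, e u w -> 2 * (D u - D w) = step (g u) (g w) - step (f u) (f w)).

Lemma displacement_trans f g h D D' : displacement f g D -> displacement g h D' ->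
  displacement f h (fun v => D v + D' v).
Proof.
move=> [congr_D edge_D] [congr_D' edge_D']; split=> [v | u w e_uw].
  by have := congr_D v; have := congr_D' v; lia.
by have := edge_D u w e_uw; have := edge_D' u w e_uw; lia.
Qed.

Lemma recol_adj_displacement f g : recol_adj e f g ->
  exists2 D, displacement f g D & (\sum_v absz (D v) <= 1)%N.
Proof.
case/and3P=> /proper_edge pf /proper_edge pg /cards1P[v0 diff_v0].
have same v : v != v0 -> f v = g v.
  move=> ne_v; apply/eqP; apply: contraNT ne_v => fg_v.
  by rewrite -in_set1 -diff_v0 inE.
have fg_v0 : f v0 != g v0 by have := set11 v0; rewrite -diff_v0 inE.
exists (fun v => if v == v0 then step (f v0) (g v0) else 0); last first.
  rewrite (bigD1 v0) //= eqxx big1 => [|v /negbTE -> //].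
  by rewrite /step; case: ifP.
split=> [v | u w e_uw].
  by case: eqVneq => [-> | /same ->]; [exact: step_congr | lia].
case: (eqVneq u v0) => [eq_u | /same f_u]; case: (eqVneq w v0) => [eq_w | /same f_w].
- by move: e_uw; rewrite eq_u eq_w e_irr.
- subst u; rewrite -f_w.
  have := @step_recolor (f v0) (g v0) (f w) fg_v0.
  by rewrite eq_sym pf // f_w eq_sym pg //; lia.
- subst w; rewrite -f_u.
  have ne_f : f u != f v0 by rewrite pf.
  have ne_g : f u != g v0 by rewrite f_u pg.
  rewrite (stepN ne_f) (stepN ne_g).
  by have := step_recolor fg_v0 ne_f ne_g; lia.
- by rewrite f_u f_w !subrr.
Qed.

Lemma walk_displacement f p : path (recol_adj e) f p ->
  exists2 D, displacement f (last f p) D & (\sum_v absz (D v) <= size p)%N.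
Proof.
elim: p f => [|g p IHp] f /=.
  move=> _; exists (fun _ => 0); last by rewrite big1.
  by split=> [v | u w _]; rewrite !subrr.
case/andP=> /recol_adj_displacement[D1 disp1 sum1] /IHp[D2 disp2 sum2].
exists (fun v => D1 v + D2 v); first exact: displacement_trans disp1 disp2.
apply: (@leq_trans (\sum_v (absz (D1 v) + absz (D2 v)))).
  by apply: leq_sum => v _; lia.
by rewrite big_split /=; lia.
Qed.

End Displacement.

Lemma connected_const (V : finType) (e : rel V) (T : eqType) (h : V -> T) :
  connected_graph e -> (forall u w, e u w -> h u = h w) -> forall u w, h u = h w.
Proof.
move=> conn h_edge u w.
have cl : closed e [pred v | h v == h u] by move=> x y /h_edge; rewrite !inE => ->.
by have := closed_connect cl (conn u w); rewrite !inE eqxx => /esym/eqP.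
Qed.

Lemma sum_mem_card (T : finType) (A : {set T}) : \sum_v (v \in A : nat) = #|A|.
Proof. by rewrite -sum1_card [RHS]big_mkcond; apply: eq_bigr => v _; case: (v \in A). Qed.

Lemma sum_absz_shift (T : finType) (S : {set T}) (m : int) :
  ((m <= -1) || (2 <= m))%R ->
  #|T| + minn #|S| (#|T| - #|S|) <= \sum_v absz (m - (v \in S)%:Z)%R.
Proof.
have cardS : #|S| <= #|T| := max_card _.
case/orP=> [m_neg | m_big].
  apply: (@leq_trans (\sum_v (1 + (v \in S)))).
    by rewrite big_split /= sum1_card sum_mem_card leq_add2l geq_minl.
  by apply: leq_sum => v _; case: (v \in S) => /=; lia.
rewrite -(leq_add2r #|S|) -sum_mem_card -big_split /= sum_mem_card.
apply: (@leq_trans (\sum_(v : T) 2)); last first.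
  by apply: leq_sum => v _; case: (v \in S) => /=; lia.
rewrite sum_nat_const.
have -> : #|xpredT| = #|T| := eq_card (fun _ => erefl).
by have := geq_minr #|S| (#|T| - #|S|); lia.
Qed.

Section FarColorings.
Variables (V : finType) (e : rel V) (Q S : {set V}).
Hypotheses (bipQ : bipartition e Q) (sub_SQ : S \subset Q).
Local Open Scope ring_scope.

Definition two_coloring : coloring V := [ffun v => if v \in Q then 0 else 1].

Definition twisted_coloring : coloring V :=
  [ffun v => if v \in S then 1 else if v \in Q then 2 else 0].

Let mem_S_Q v : (v \in S) ==> (v \in Q).
Proof. exact/implyP/subsetP. Qed.

Lemma proper_two_coloring : Defs.proper e two_coloring.
Proof.
apply/forallP=> u; apply/forallP=> w; apply/implyP=> /bipQ.
by rewrite !ffunE; case: (u \in Q); case: (w \in Q).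
Qed.

Lemma proper_twisted_coloring : Defs.proper e twisted_coloring.
Proof.
apply/forallP=> u; apply/forallP=> w; apply/implyP=> /bipQ; rewrite !ffunE.
move: (mem_S_Q u) (mem_S_Q w).
by case: (u \in S); case: (w \in S); case: (u \in Q); case: (w \in Q).
Qed.

Lemma displacement_twisted D : displacement e two_coloring twisted_coloring D ->
  [/\ forall v, (D v + (v \in S)%:Z = 2 %[mod 3])%Z
    & forall u w, e u w -> D u + (u \in S)%:Z = D w + (w \in S)%:Z].
Proof.
move=> [congr_D edge_D]; split=> [v | u w e_uw].
  have := congr_D v; rewrite !ffunE.
  move: (mem_S_Q v); case: (v \in S); case: (v \in Q) => //= _;
    by rewrite /Zp_trunc /= ?modn_small //; lia.
have [s01 s10 s20 s02] :
  [/\ step 0 1 = 1, step 1 0 = -1, step 2 0 = 1 & step 0 2 = -1] by [].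
have := edge_D u w e_uw; have := bipQ e_uw; rewrite !ffunE.
move: (mem_S_Q u) (mem_S_Q w).
by case: (u \in S); case: (w \in S); case: (u \in Q); case: (w \in Q) => //= _ _ _;
  rewrite ?s01 ?s10 ?s20 ?s02; lia.
Qed.

Lemma twisted_walk_length k : irreflexive e -> connected_graph e ->
  walk_of_len e k two_coloring twisted_coloring ->
  (#|V| + minn #|S| (#|V| - #|S|) <= k)%N.
Proof.
move=> e_irr conn /existsP[p /andP[walk_p /eqP end_p]].
have [D disp sumD] := walk_displacement e_irr walk_p.
rewrite end_p size_tuple in disp sumD.
have [congr_D edge_D] := displacement_twisted disp.
have [r _ | V0] := pickP (fun _ : V => true); last first.
  have V_0 : #|V| = 0 by apply: eq_card0 => v; have := V0 v.
  by have := max_card S; rewrite V_0; lia.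
have const_D := connected_const (h := fun v => D v + (v \in S)%:Z) conn edge_D.
apply: leq_trans (sum_absz_shift S (m := D r + (r \in S)%:Z) _) (leq_trans _ sumD).
  by have := congr_D r; lia.
by apply: leq_sum => v _; rewrite -(const_D v r) addrK.
Qed.

End FarColorings.

Lemma subset_of_card (T : finType) (A : {set T}) k : k <= #|A| ->
  exists2 S : {set T}, S \subset A & #|S| = k.
Proof.
move=> le_kA; exists [set x in take k (enum A)].
  by apply/subsetP=> x; rewrite inE => /mem_take; rewrite mem_enum.
rewrite cardsE (card_uniqP (take_uniq k (enum_uniq (mem A)))) size_take -cardE.
by case: ltngtP le_kA => //; lia.
Qed.

Lemma card_coloring (V : finType) : #|{: coloring V}| = 3 ^ #|V|.
Proof. by rewrite card_ffun card_ord. Qed.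

Lemma recol_dist_lb (V : finType) (e : rel V) (f g : coloring V) m :
  m <= #|{: coloring V}| -> (forall k, walk_of_len e k f g -> m <= k) ->
  m <= recol_dist e f g.
Proof.
move=> le_m walk_lb; rewrite /recol_dist.
set walks := fun k => walk_of_len e k f g.
have [has_walk | /hasNfind ->] := boolP (has walks (iota 0 #|{: coloring V}|)).
  have lt_find := has_walk; rewrite has_find size_iota in lt_find.
  by apply: walk_lb; have := nth_find 0 has_walk; rewrite nth_iota.
by rewrite size_iota.
Qed.

Theorem mainTheorem11 (V : finType) (e : rel V) :
  is_tree e -> (3 * #|V|) %/ 2 <= recol_diam e.
Proof.
case=> [[e_sym e_irr] conn acyclic].
have [Q0 /bipartition_half[Q bipQ halfQ]] := tree_bipartition e_sym e_irr conn acyclic.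
have [S sub_SQ cardS] := subset_of_card halfQ.
apply: leq_trans (leq_bigmax_cond _ (proper_two_coloring bipQ)).
apply: leq_trans (leq_bigmax_cond _ (proper_twisted_coloring bipQ sub_SQ)).
apply: recol_dist_lb => [|k /(twisted_walk_length bipQ sub_SQ e_irr conn)].
  rewrite card_coloring; case: #|V| => [|n] //; rewrite expnS.
  by have := ltn_expl n (isT : 1 < 3); lia.
by rewrite cardS; lia.
Qed.
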